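(* Let $g,r,d$ and ramification sequences $\alpha,\beta$ satisfy $\rho(g,r,d,\alpha,\beta)=0$. If $r\ge2$ and $\alpha_r+\beta_r+g-d+r>r+1$, then there is a non-identity element of the EH group (one of the generators $\pi_{t,a}$) which moves at most $\tfrac14$ of the elements of $YT(g,r,d,\alpha,\beta)$.
   Context: Ramification sequences: $\alpha=(\alpha_0,\dots,\alpha_r)$ integers with $d-r\ge\alpha_0\ge\cdots\ge\alpha_r\ge0$, $|\alpha|=\sum\alpha_i$; $g-d+r\ge0$; $\rho(g,r,d,\alpha,\beta)=g-(r+1)(g-d+r)-|\alpha|-|\beta|$. Skew diagram $\sigma(g,r,d,\alpha,\beta)$ (with $m=g-d+r$): rows $k=1,\dots,r+1$ numbered top to bottom, row $k$ consisting of boxes $(k,c)$ with $\alpha_0-\alpha_{r+1-k}<c\le\alpha_0+m+\beta_{k-1}$ (columns numbered left to right); it has $g$ boxes when $\rho=0$. $YT(g,r,d,\alpha,\beta)$ is the set of standard Young tableaux of this shape: bijective fillings with $1,\dots,g$ strictly increasing along rows (left to right) and columns (top to bottom). The distance between boxes $(i,j),(i',j')$ is $|i-i'|+|j-j'|$. For $1\le t<g$ and $a>0$, $\pi_{t,a}$ is the permutation of $YT(g,r,d,\alpha,\beta)$ exchanging the entries $t$ and $t+1$ in every tableau where they lie in different rows and different columns at distance exactly $a$, and fixing all other tableaux. The EH group is the subgroup of the symmetric group on $YT(g,r,d,\alpha,\beta)$ generated by all $\pi_{t,a}$. An element moves a tableau if it does not fix it. *)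

From mathcomp Require Import all_boot all_order all_algebra.
Set Implicit Arguments. Unset Strict Implicit. Unset Printing Implicit Defensive.
Import GRing.Theory Num.Theory.

(* Ramification sequence alpha = (alpha 0, ..., alpha r) (values of alpha at
   indices > r are irrelevant):  d - r >= alpha_0 >= ... >= alpha_r >= 0.
   "d - r >= alpha_0" is stated as alpha_0 + r <= d (integer reading). *)
Definition ramif (r d : nat) (alpha : nat -> nat) : Prop :=
  alpha 0 + r <= d /\ (forall i, i < r -> alpha i.+1 <= alpha i).

Definition wt (r : nat) (alpha : nat -> nat) : nat := \sum_(i < r.+1) alpha i.

Definition rho (g r d : nat) (alpha beta : nat -> nat) : int :=
  (g%:Z - (r.+1)%:Z * (g%:Z - d%:Z + r%:Z) - (wt r alpha)%:Z - (wt r beta)%:Z)%R.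

(* m = g - d + r (as a nat; meaningful under the hypothesis g - d + r >= 0) *)
Definition mm (g r d : nat) : nat := g + r - d.

(* Number of columns of the bounding box: columns are 1 .. alpha_0 + m + beta_0,
   column c is encoded as the ordinal with value c. *)
Definition ncol (g r d : nat) (alpha beta : nat -> nat) : nat :=
  (alpha 0 + mm g r d + beta 0).+1.

(* A box (k, c): row k (1-based) is encoded by the ordinal of value k-1. *)
Definition box (g r d : nat) (alpha beta : nat -> nat) : finType :=
  ('I_(r.+1) * 'I_(ncol g r d alpha beta))%type.

(* Box (k,c) lies in sigma(g,r,d,alpha,beta) iff
   alpha_0 - alpha_(r+1-k) < c <= alpha_0 + m + beta_(k-1). *)
Definition inshape g r d alpha beta (b : box g r d alpha beta) : bool :=
  let k := val b.1 in let c := val b.2 in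
  (alpha 0 - alpha (r - k) < c) && (c <= alpha 0 + mm g r d + beta k).

(* A filling by 1..g is encoded by T : 'I_g -> box, with T i the box
   containing the entry i+1. *)
Definition tableau (g r d : nat) (alpha beta : nat -> nat) : finType :=
  {ffun 'I_g -> box g r d alpha beta}.

Definition is_syt g r d alpha beta (T : tableau g r d alpha beta) : bool :=
  [&& injectiveb T,
      [forall i, inshape (T i)],
      [forall b : box g r d alpha beta, inshape b ==> (b \in codom T)],
      [forall i, forall j,
         ((T i).1 == (T j).1) && (val (T i).2 < val (T j).2) ==> (val i < val j)] &
      [forall i, forall j,
         ((T i).2 == (T j).2) && (val (T i).1 < val (T j).1) ==> (val i < val j)]].

Definition YT g r d alpha beta : {set tableau g r d alpha beta} :=
  [set T | is_syt T].

Definition pos g r d alpha beta (T : tableau g r d alpha beta) (t : nat)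
  : box g r d alpha beta :=
  match (insub t.-1 : option 'I_g) with Some k => T k | None => (ord0, ord0) end.

Definition absd (x y : nat) : nat := (x - y) + (y - x).

Definition dist g r d alpha beta (b b' : box g r d alpha beta) : nat :=
  absd (val b.1) (val b'.1) + absd (val b.2) (val b'.2).

Definition piEH g r d alpha beta (t a : nat) (T : tableau g r d alpha beta)
  : tableau g r d alpha beta :=
  let p := pos T t in let q := pos T t.+1 in
  if (p.1 != q.1) && (p.2 != q.2) && (dist p q == a) then
    [ffun k : 'I_g => if val k == t.-1 then q else if val k == t then p else T k]
  else T.

(* Let c be the first column of the third row from the bottom; the hypotheses on
   alpha_r + beta_r + g - d + r and r >= 2 ensure that the bottom three rows all contain
   the columns c .. c + 3.  Keeping all rows above them whole and the bottom three rows up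
   to columns (c + 2, c, c), resp. (c + 2, c + 1, c - 1), gives two order ideals of the
   skew diagram with the same number t of boxes.  Listing an order ideal before its
   complement, with a prescribed maximal box of the ideal last and a prescribed minimal box
   of the complement first, yields a standard tableau; this places t and t + 1 at
   distance 5 in the first ideal and at distances 2, 4, 3 in the second.  So pi_{t,a}
   moves some tableau for each a in {2, 3, 4, 5}.  A tableau moved by pi_{t,a} has t and
   t + 1 at distance a, so the four sets of moved tableaux are disjoint and one of them
   contains at most a quarter of all tableaux. *)

From mathcomp Require Import all_boot all_order all_algebra.
From mathcomp Require Import zify.
Import GRing.Theory Num.Theory.
Set Implicit Arguments. Unset Strict Implicit. Unset Printing Implicit Defensive.

Lemma index_sorted_count (T : eqType) (key : T -> nat) (s : seq T) x :
  {in s &, injective key} -> sorted (relpre key leq) s -> x \in s ->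
  index x s = count (fun y => key y < key x) s.
Proof.
rewrite sorted_pairwise; last by move=> y z w /=; apply: leq_trans.
elim: s => //= y s IH key_inj /andP[/allP key_y_min sorted_s].
rewrite in_cons eq_sym; case: eqP => [<- _ | neq_yx /= x_s].
  rewrite ltnn; apply/esym/eqP; rewrite -leqn0 leqNgt -has_count.
  by apply/hasPn => z /key_y_min /=; rewrite -leqNgt.
have key_yx : key y < key x.
  rewrite ltn_neqAle [_ <= _](key_y_min x x_s) andbT.
  apply/eqP => eq_key; apply: neq_yx.
  by apply: key_inj eq_key; rewrite inE ?eqxx ?x_s ?orbT.
rewrite key_yx IH //; apply: sub_in2 key_inj => z z_s.
by rewrite in_cons z_s orbT.
Qed.

Lemma exists_small_fiber (T : finType) (A : {set T}) (f : T -> nat)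
    (P : nat -> pred T) (s : seq nat) :
  uniq s -> s != [::] -> (forall a x, P a x -> f x = a) ->
  exists2 a, a \in s & size s * #|[set x in A | P a x]| <= #|A|.
Proof.
move=> s_uniq s_nil Pf.
have card_class a : #|[set x in A | P a x]| = \sum_(x in A) P a x.
  rewrite -sum1_card [RHS]big_mkcond [LHS]big_mkcond /=; apply: eq_bigr => x _.
  by rewrite inE; case: (x \in A); case: (P a x).
have sum_le : \sum_(a <- s) #|[set x in A | P a x]| <= #|A|.
  under eq_bigr => a _ do rewrite card_class.
  rewrite exchange_big /= -sum1_card; apply: leq_sum => x _.
  apply: (@leq_trans (count_mem (f x) s)); last by rewrite count_uniq_mem ?leq_b1.
  rewrite -sum1_count [X in _ <= X]big_mkcond; apply: leq_sum => a _ /=.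
  by have := Pf a x; case: (P a x) => [/(_ isT) ->|_]; rewrite ?eqxx.
case: (boolP (has (fun a => size s * #|[set x in A | P a x]| <= #|A|) s)).
  by case/hasP => a; exists a.
move/hasPn => all_big.
have: \sum_(a <- s) #|A|.+1 <= size s * #|A|.
  apply: leq_trans (leq_mul (leqnn (size s)) sum_le).
  rewrite big_distrr /= big_seq_cond [X in _ <= X]big_seq_cond.
  by apply: leq_sum => a /andP[a_s _]; rewrite ltnNge all_big.
rewrite big_const_seq count_predT iter_addn_0 mulnC leq_mul2l ltnn orbF.
by case: s s_nil {s_uniq all_big sum_le}.
Qed.

Section LinearExtension.

Variables (B : finType) (le : rel B) (rank : B -> nat) (K : nat).
Hypothesis rank_inj : injective rank.
Hypothesis rank_lt : forall b, rank b < K.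
Hypothesis rank_mono : forall b b', le b b' -> b != b' -> rank b < rank b'.

Variables (S I : pred B) (p q : B).
Hypothesis I_down : forall b b', le b b' -> I b' -> I b.
Hypothesis p_max : forall b, le p b -> b != p -> ~~ I b.
Hypothesis q_min : forall b, le b q -> b != q -> I b.
Hypotheses (Sp : S p) (Sq : S q) (Ip : I p) (nIq : ~~ I q).

(* Boxes are listed by level (I without p, then p, then q, then the rest) and by rank
   within a level. *)
Definition level b : nat := if I b then nat_of_bool (b == p) else 2 + (b != q).

Definition key b := level b * K + rank b.

Definition linext := sort (relpre key leq) (enum S).

Lemma level_le3 b : level b <= 3.
Proof. by rewrite /level; case: (I b); case: (b == p); case: (b != q). Qed.

Lemma level_mono b b' : le b b' -> b != b' -> level b <= level b'.
Proof.
move=> le_bb' neq_bb'; rewrite /level.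
case Ib': (I b').
  rewrite (I_down le_bb' Ib'); case: (b =P p) => [eq_bp|//]; subst b.
  by move: (p_max le_bb'); rewrite eq_sym neq_bb' Ib' => /(_ isT).
case: (b' =P q) => [eq_bq | _]; last by have := level_le3 b; rewrite /level.
by subst b'; rewrite (q_min le_bb' neq_bb'); case: (b == p); rewrite /= ?eqxx.
Qed.

Lemma key_mono b b' : le b b' -> b != b' -> key b < key b'.
Proof.
move=> le_bb' neq_bb'; rewrite /key -addnS leq_add ?rank_mono //.
by rewrite leq_mul ?level_mono.
Qed.

Lemma key_lt_of_level b b' : level b < level b' -> key b < key b'.
Proof.
move=> lt_level; rewrite /key; apply: leq_trans (leq_addr _ _).
by apply: leq_trans (leq_mul lt_level (leqnn K)); rewrite mulSnr ltn_add2l.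
Qed.

Lemma key_modK b : key b %% K = rank b.
Proof. by rewrite /key modnMDl modn_small. Qed.

Lemma key_inj : injective key.
Proof. by move=> b b' /(congr1 (modn^~ K)); rewrite !key_modK => /rank_inj. Qed.

Lemma key_lt_level b y : (forall z, level z = level b -> z = b) ->
  (key y < key b) = (level y < level b).
Proof.
move=> level_b_uniq.
case: (ltngtP (level y) (level b)) => [lt_yb|lt_by|/level_b_uniq ->].
- exact: key_lt_of_level.
- by rewrite ltnNge (ltnW (key_lt_of_level lt_by)).
- by rewrite !ltnn.
Qed.

Lemma linext_uniq : uniq linext.
Proof. by rewrite sort_uniq enum_uniq. Qed.

Lemma mem_linext b : (b \in linext) = S b.
Proof. by rewrite mem_sort mem_enum. Qed.

Lemma size_linext : size linext = #|S|.
Proof. by rewrite size_sort cardE. Qed.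

Lemma linext_sorted : sorted (relpre key leq) linext.
Proof. by rewrite sort_sorted // => x y; apply: leq_total. Qed.

Lemma linext_mono x0 i j : i < size linext -> j < size linext ->
  le (nth x0 linext i) (nth x0 linext j) -> nth x0 linext i != nth x0 linext j -> i < j.
Proof.
move=> lti ltj le_ij neq_ij; rewrite ltnNge; apply/negP => le_ji.
have /(pairwiseP x0) sorted_key : pairwise (relpre key leq) linext.
  by rewrite -sorted_pairwise ?linext_sorted // => y x z /=; apply: leq_trans.
move: le_ji; rewrite leq_eqVlt => /orP[/eqP eq_ji | lt_ji].
  by move: neq_ij; rewrite eq_ji eqxx.
by have := sorted_key _ _ ltj lti lt_ji; rewrite /= leqNgt key_mono.
Qed.

Lemma index_linext b : S b -> index b linext = #|[pred y | S y && (key y < key b)]|.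
Proof.
move=> Sb; rewrite (index_sorted_count (in2W key_inj)) ?linext_sorted ?mem_linext //.
rewrite count_sort -size_filter -(card_uniqP _) ?filter_uniq ?enum_uniq ?index_enum_uniq //.
by apply: eq_card => y; rewrite mem_filter mem_enum inE andbC.
Qed.

Definition n_ideal := #|[pred b | S b && I b]|.

Lemma index_linext_p : index p linext = n_ideal.-1.
Proof.
rewrite index_linext // /n_ideal [in RHS](cardD1 p) inE Sp Ip /=.
apply: eq_card => y; rewrite !inE key_lt_level; last first.
  by move=> z; rewrite /level Ip eqxx; case: (I z); case: (z =P p); case: (z != q).
by rewrite /level Ip; case: (I y); case: (y =P p) => [->|_]; rewrite ?Ip ?eqxx ?andbF ?andbT.
Qed.

Lemma index_linext_q : index q linext = n_ideal.
Proof.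
rewrite index_linext //; apply: eq_card => y; rewrite !inE key_lt_level; last first.
  by move=> z; rewrite /level (negbTE nIq) eqxx; case: (I z); case: (z =P q); case: (z == p).
rewrite /level (negbTE nIq) eqxx.
by case: (I y); case: (y == p); case: (y != q); rewrite ?andbT ?andbF.
Qed.

End LinearExtension.

Section Tableaux.

Variables (g r d : nat) (alpha beta : nat -> nat).
Local Notation box := (box g r d alpha beta).
Local Notation N := (ncol g r d alpha beta).

Definition le_box (b b' : box) := (b.1 <= b'.1) && (b.2 <= b'.2).

Definition rank_box (b : box) := b.1 * N + b.2.

Lemma rank_box_lt b : rank_box b < r.+1 * N.
Proof. by case: b => k c; rewrite /rank_box /=; have := ltn_ord k; have := ltn_ord c; nia. Qed.

Lemma rank_box_inj : injective rank_box.
Proof.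
have divK (b : box) : rank_box b %/ N = b.1 by rewrite /rank_box divnMDl // divn_small ?addn0.
have modK (b : box) : rank_box b %% N = b.2 by rewrite /rank_box modnMDl modn_small.
move=> [k c] [k' c'] eq_rank; congr (_, _); apply: val_inj.
  by have := divK (k, c); rewrite eq_rank divK.
by have := modK (k, c); rewrite eq_rank modK.
Qed.

Lemma rank_box_mono b b' : le_box b b' -> b != b' -> rank_box b < rank_box b'.
Proof.
case: b b' => [k c] [k' c'] /andP[/= le_k le_c]; rewrite xpair_eqE -!val_eqE /= /rank_box /=.
by have := ltn_ord c; have := ltn_ord c'; nia.
Qed.

Definition tableau_of_seq (x0 : box) (L : seq box) : tableau g r d alpha beta :=
  [ffun i : 'I_g => nth x0 L i].

Lemma tableau_of_seq_syt x0 L :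
  uniq L -> (forall b, (b \in L) = inshape b) -> size L = g ->
  (forall i j, i < g -> j < g -> le_box (nth x0 L i) (nth x0 L j) ->
     nth x0 L i != nth x0 L j -> i < j) ->
  tableau_of_seq x0 L \in YT g r d alpha beta.
Proof.
move=> L_uniq mem_L size_L L_mono; set T := tableau_of_seq x0 L.
have TE i : T i = nth x0 L i by rewrite ffunE.
have T_mono (i j : 'I_g) : le_box (T i) (T j) -> T i != T j -> i < j.
  by rewrite !TE; apply: L_mono.
rewrite inE; apply/and5P; split.
- apply/injectiveP => i j; rewrite !TE => /eqP.
  by rewrite nth_uniq ?size_L // => /eqP /val_inj.
- by apply/forallP => i; rewrite TE -mem_L mem_nth ?size_L.
- apply/forallP => b; apply/implyP; rewrite -mem_L => b_L.
  have lt_b : index b L < g by rewrite -[X in _ < X]size_L index_mem.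
  by apply/codomP; exists (Ordinal lt_b); rewrite TE nth_index.
- apply/'forall_forallP => i j; apply/implyP => /andP[/eqP eq_row lt_col].
  apply: T_mono; first by rewrite /le_box eq_row leqnn ltnW.
  by apply: contraTneq lt_col => ->; rewrite ltnn.
- apply/'forall_forallP => i j; apply/implyP => /andP[/eqP eq_col lt_row].
  apply: T_mono; first by rewrite /le_box eq_col leqnn ltnW.
  by apply: contraTneq lt_row => ->; rewrite ltnn.
Qed.

Lemma pos_tableau_of_seq x0 L t : 0 < t <= g -> pos (tableau_of_seq x0 L) t = nth x0 L t.-1.
Proof.
move=> /andP[t_gt0 t_le]; rewrite /pos; case: insubP => [k _ val_k|]; first by rewrite ffunE val_k.
by rewrite prednK // t_le.
Qed.

Lemma exists_syt_ideal (I : pred box) (p q : box) :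
  #|[pred b : box | inshape b]| = g ->
  (forall b b', le_box b b' -> I b' -> I b) ->
  (forall b, le_box p b -> b != p -> ~~ I b) ->
  (forall b, le_box b q -> b != q -> I b) ->
  inshape p -> inshape q -> I p -> ~~ I q ->
  let n := #|[pred b | inshape b && I b]| in
  0 < n < g /\ exists2 T, T \in YT g r d alpha beta & pos T n = p /\ pos T n.+1 = q.
Proof.
move=> card_shape I_down p_max q_min Sp Sq Ip nIq n.
set L := linext rank_box (r.+1 * N) [pred b : box | inshape b] I p q.
have n_gt0 : 0 < n by apply/card_gt0P; exists p; rewrite inE Sp Ip.
have index_p : index p L = n.-1 := index_linext_p rank_box_inj rank_box_lt q Sp Ip.
have index_q : index q L = n := index_linext_q rank_box_inj rank_box_lt p Sq nIq.
have size_L : size L = g by rewrite size_linext.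
have n_lt : n < g by rewrite -index_q -[X in _ < X]size_L index_mem mem_linext.
split; first by rewrite n_gt0.
exists (tableau_of_seq p L).
  apply: tableau_of_seq_syt; rewrite ?linext_uniq //.
  - by move=> b; rewrite mem_linext.
  - move=> i j lti ltj.
    by apply: (linext_mono rank_box_mono I_down p_max q_min); rewrite size_L.
rewrite !pos_tableau_of_seq ?n_gt0 ?(ltnW n_lt) //= -index_p -index_q.
by rewrite !nth_index ?mem_linext.
Qed.

Lemma posE (T : tableau g r d alpha beta) t (lt_t : t.-1 < g) : pos T t = T (Ordinal lt_t).
Proof.
rewrite /pos; case: insubP => [k _ val_k|]; last by rewrite lt_t.
by congr (T _); apply: val_inj.
Qed.

Lemma piEH_moved_dist (T : tableau g r d alpha beta) t a :
  piEH t a T != T -> dist (pos T t) (pos T t.+1) = a.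
Proof. by rewrite /piEH; case: ifP => [/andP[_ /eqP]|_]; rewrite ?eqxx. Qed.

Lemma piEH_moves (T : tableau g r d alpha beta) t : 0 < t < g ->
  (pos T t).1 != (pos T t.+1).1 -> (pos T t).2 != (pos T t.+1).2 ->
  piEH t (dist (pos T t) (pos T t.+1)) T != T.
Proof.
move=> /andP[t_gt0 lt_t] neq_row neq_col.
have lt_t1 : t.-1 < g by rewrite prednK // ltnW.
rewrite /piEH neq_row neq_col eqxx /=; apply/eqP => /ffunP/(_ (Ordinal lt_t1)).
rewrite ffunE eqxx -posE => eq_pos.
by move: neq_row; rewrite eq_pos eqxx.
Qed.

End Tableaux.

Lemma ramif_mono r d f : ramif r d f -> forall i j, i <= j -> j <= r -> f j <= f i.
Proof.
move=> [_ f_step] i j; elim: j => [|j IH] le_ij le_jr; first by case: i le_ij.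
rewrite leq_eqVlt in le_ij; case/orP: le_ij => [/eqP -> //|lt_ij].
by apply: leq_trans (f_step j le_jr) (IH lt_ij (ltnW le_jr)).
Qed.

Lemma count_between n lo hi :
  \sum_(0 <= c < n) ((lo < c) && (c <= hi) : nat) = minn n hi.+1 - minn n lo.+1.
Proof.
elim: n => [|n IH]; first by rewrite big_geq.
by rewrite big_nat_recr //= IH; case: (ltnP lo n); case: (leqP n hi); lia.
Qed.

Lemma g_of_rho0 g r d alpha beta :
  (0 <= g%:Z - d%:Z + r%:Z)%R -> rho g r d alpha beta = 0%R ->
  g = r.+1 * mm g r d + wt r alpha + wt r beta.
Proof.
rewrite /rho /mm => m_ge0 rho0.
have m_eq : ((g + r - d)%:Z = g%:Z - d%:Z + r%:Z)%R by lia.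
nia.
Qed.

Section Shape.

Variables (g r d : nat) (alpha beta : nat -> nat).
Hypotheses (ramif_alpha : ramif r d alpha) (ramif_beta : ramif r d beta).
Local Notation box := (box g r d alpha beta).
Local Notation N := (ncol g r d alpha beta).
Local Notation m := (mm g r d).

Lemma card_inshape : #|[pred b : box | inshape b]| = r.+1 * m + wt r alpha + wt r beta.
Proof.
transitivity (\sum_(k < r.+1) \sum_(c < N)
    ((alpha 0 - alpha (r - k) < c) && (c <= alpha 0 + m + beta k) : nat)).
  rewrite pair_big /= -sum1_card big_mkcond /=.
  by apply: eq_bigr => -[k c] _; rewrite inE /inshape /=; case: ifP.
transitivity (\sum_(k < r.+1) (m + beta k + alpha (r - k))).
  apply: eq_bigr => k _.
  pose in_row c := (alpha 0 - alpha (r - k) < c) && (c <= alpha 0 + m + beta k).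
  rewrite -(big_mkord xpredT (fun c => in_row c : nat)) count_between /ncol.
  have := ramif_mono ramif_alpha (leq0n (r - k)) (leq_subr k r).
  have := ramif_mono ramif_beta (leq0n k) (ltnSE (ltn_ord k)); lia.
rewrite !big_split /= sum_nat_const card_ord /wt -addnA [X in _ + X]addnC addnA.
congr (_ + _ + _); rewrite (reindex_inj rev_ord_inj) /=; apply: eq_bigr => k _.
by rewrite subSS subKn // -ltnS.
Qed.

Definition mkbox (k c : nat) : box := (inord k, inord c).

Lemma mkbox_row k c : k <= r -> val (mkbox k c).1 = k.
Proof. by move=> le_kr; rewrite /= inordK. Qed.

Lemma mkbox_col k c : c < N -> val (mkbox k c).2 = c.
Proof. by move=> lt_cN; rewrite /= inordK. Qed.

Lemma le_mkbox_l k c (b : box) : k <= r -> c < N ->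
  le_box (mkbox k c) b = (k <= b.1) && (c <= b.2).
Proof. by move=> le_kr lt_cN; rewrite /le_box mkbox_row ?mkbox_col. Qed.

Lemma le_mkbox_r k c (b : box) : k <= r -> c < N ->
  le_box b (mkbox k c) = (b.1 <= k) && (b.2 <= c).
Proof. by move=> le_kr lt_cN; rewrite /le_box mkbox_row ?mkbox_col. Qed.

Lemma eq_mkbox k c (b : box) : k <= r -> c < N ->
  (b == mkbox k c) = (val b.1 == k) && (val b.2 == c).
Proof. by case: b => i j le_kr lt_cN; rewrite xpair_eqE -!val_eqE /= !inordK. Qed.

Definition below (cut : nat -> nat) (b : box) := b.2 < cut b.1.

Definition cut_nonincr (cut : nat -> nat) := forall k k', k <= k' -> k' <= r -> cut k' <= cut k.

Definition max_below (cut : nat -> nat) k c :=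
  c.+1 = cut k /\ forall k', k < k' -> k' <= r -> cut k' <= c.

Definition min_above (cut : nat -> nat) k c :=
  c = cut k /\ forall k', k' < k -> c < cut k'.

Lemma below_down cut : cut_nonincr cut ->
  forall b b' : box, le_box b b' -> below cut b' -> below cut b.
Proof.
move=> cut_mono [k c] [k' c'] /andP[/= le_k le_c]; rewrite /below /= => lt_c'.
by apply: leq_ltn_trans le_c (leq_trans lt_c' (cut_mono _ _ le_k _)); rewrite -ltnS.
Qed.

Lemma below_max cut k c : k <= r -> c < N -> max_below cut k c ->
  forall b, le_box (mkbox k c) b -> b != mkbox k c -> ~~ below cut b.
Proof.
move=> le_kr lt_cN [cut_k cut_after] b; rewrite le_mkbox_l // eq_mkbox // /below -leqNgt.
case: b => [k' c'] /= /andP[le_k le_c]; rewrite negb_and.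
have le_k'r : k' <= r by rewrite -ltnS.
case: (ltngtP k k') => [lt_k _|lt_k'|<-]; first exact: leq_trans (cut_after _ _ _) le_c.
  by move: le_k; rewrite leqNgt lt_k'.
by rewrite /= -cut_k ltn_neqAle le_c eq_sym andbT.
Qed.

Lemma below_min cut k c : k <= r -> c < N -> min_above cut k c ->
  forall b, le_box b (mkbox k c) -> b != mkbox k c -> below cut b.
Proof.
move=> le_kr lt_cN [cut_k cut_before] b; rewrite le_mkbox_r // eq_mkbox // /below.
case: b => [k' c'] /= /andP[le_k le_c]; rewrite negb_and.
case: (ltngtP k' k) => [lt_k _|lt_k'|->]; first exact: leq_ltn_trans le_c (cut_before _ _).
  by move: le_k; rewrite leqNgt lt_k'.
by rewrite /= -cut_k ltn_neqAle le_c andbT.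
Qed.

Hypotheses (r_ge2 : 2 <= r) (corner_room : 3 < alpha r + beta r + m).

(* The first column of the third row from the bottom. *)
Definition corner := alpha 0 - alpha 2 + 1.

Lemma corner_block_col c : c <= corner + 3 -> c < N.
Proof.
have := ramif_mono ramif_alpha (leq0n 2) r_ge2.
have := ramif_mono ramif_alpha r_ge2 (leqnn r).
have := ramif_mono ramif_beta (leq0n r) (leqnn r).
rewrite /corner /ncol; lia.
Qed.

Lemma corner_block_inshape k c :
  r - 2 <= k <= r -> corner <= c <= corner + 3 -> inshape (mkbox k c).
Proof.
move=> /andP[le_k le_kr] /andP[le_c le_c3].
rewrite /inshape mkbox_row // mkbox_col ?corner_block_col //.
have le_rk2 : r - k <= 2 by lia.
have := ramif_mono ramif_alpha le_rk2 r_ge2; have := ramif_mono ramif_alpha (leq0n 2) r_ge2.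
have := ramif_mono ramif_alpha r_ge2 (leqnn r); have := ramif_mono ramif_beta le_kr (leqnn r).
rewrite /corner in le_c le_c3 *; lia.
Qed.

Definition bottom_cut x y z k :=
  if k < r - 2 then N else corner + (if k == r - 2 then x else if k == r - 1 then y else z).

Ltac bottom_cut_arith :=
  have := corner_block_col (leqnn _); rewrite /bottom_cut; repeat match goal with
  | |- context[if ?x < ?y then _ else _] => case: (ltnP x y)
  | |- context[if ?x == ?y then _ else _] => case: (x =P y)
  end; lia.

Lemma bottom_cut_nonincr x y z : z <= y -> y <= x -> x <= 3 -> cut_nonincr (bottom_cut x y z).
Proof. by move=> zy yx x3 k k' le_k le_k'; bottom_cut_arith. Qed.

Lemma card_below_swap :
  #|[pred b : box | inshape b && below (bottom_cut 3 1 1) b]| =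
  #|[pred b : box | inshape b && below (bottom_cut 3 2 0) b]|.
Proof.
have lt_c0 : corner < N by apply: corner_block_col; lia.
have lt_c1 : corner.+1 < N by apply: corner_block_col; lia.
have in_p : inshape (mkbox r corner) by apply: corner_block_inshape; lia.
have in_q : inshape (mkbox (r - 1) corner.+1) by apply: corner_block_inshape; lia.
rewrite (cardD1 (mkbox r corner)) [in RHS](cardD1 (mkbox (r - 1) corner.+1)) !inE in_p in_q.
rewrite /below !mkbox_row ?leq_subr // !mkbox_col //.
have [-> ->] : corner < bottom_cut 3 1 1 r /\ corner.+1 < bottom_cut 3 2 0 (r - 1).
  by split; bottom_cut_arith.
congr (_ + _); apply: eq_card => -[k c]; rewrite !inE !eq_mkbox ?leq_subr //=.
case: (inshape _); rewrite ?andbF //=.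
by case: k c => [k lt_k] [c lt_c] /=; apply/idP/idP; bottom_cut_arith.
Qed.

Hypothesis card_inshape_g : #|[pred b : box | inshape b]| = g.

Lemma piEH_moves_at_cut cut kp cp kq cq a :
  cut_nonincr cut -> kp <= r -> kq <= r -> cp < N -> cq < N ->
  kp != kq -> cp != cq -> inshape (mkbox kp cp) -> inshape (mkbox kq cq) ->
  max_below cut kp cp -> min_above cut kq cq -> absd kp kq + absd cp cq = a ->
  let n := #|[pred b | inshape b && below cut b]| in
  0 < n < g /\ exists2 T, T \in YT g r d alpha beta & piEH n a T != T.
Proof.
move=> cut_mono le_kp le_kq lt_cp lt_cq ne_k ne_c Sp Sq p_max q_min <- n.
have [||n_range [T YT_T [pos_n pos_n1]]] := exists_syt_ideal card_inshape_g
  (below_down cut_mono) (below_max le_kp lt_cp p_max) (below_min le_kq lt_cq q_min) Sp Sq.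
- by rewrite /below mkbox_row // mkbox_col // -p_max.1.
- by rewrite /below mkbox_row // mkbox_col // -q_min.1 ltnn.
split=> //; exists T => //.
have -> : absd kp kq + absd cp cq = dist (pos T n) (pos T n.+1).
  by rewrite pos_n pos_n1 /dist !mkbox_row // !mkbox_col.
by apply: piEH_moves; rewrite // pos_n pos_n1 -!val_eqE /= !inordK.
Qed.

Ltac corner_side_goal :=
  match goal with
  | |- cut_nonincr _ => exact: bottom_cut_nonincr
  | |- max_below _ _ _ => split; [|move=> *]; bottom_cut_arith
  | |- min_above _ _ _ => split; [|move=> *]; bottom_cut_arith
  | |- is_true (inshape _) => apply: corner_block_inshape; lia
  | |- is_true (_ < ncol _ _ _ _ _) => apply: corner_block_col; lia
  | |- absd _ _ + absd _ _ = _ => rewrite /absd; lia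
  | _ => lia
  end.

Lemma piEH_moves_at_bottom_cut a : a \in [:: 5; 2; 4; 3] ->
  let t := #|[pred b : box | inshape b && below (bottom_cut 3 1 1) b]| in
  0 < t < g /\ exists2 T, T \in YT g r d alpha beta & piEH t a T != T.
Proof.
rewrite !inE => /or4P[] /eqP -> t.
- by apply: (@piEH_moves_at_cut _ r corner (r - 2) (corner + 3)); corner_side_goal.
- rewrite /t card_below_swap.
  by apply: (@piEH_moves_at_cut _ (r - 1) (corner + 1) r corner); corner_side_goal.
- rewrite /t card_below_swap.
  by apply: (@piEH_moves_at_cut _ (r - 2) (corner + 2) r corner); corner_side_goal.
- rewrite /t card_below_swap.
  by apply: (@piEH_moves_at_cut _ (r - 1) (corner + 1) (r - 2) (corner + 3)); corner_side_goal.
Qed.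

End Shape.

Unset Implicit Arguments.

Theorem lemma4p4 (g r d : nat) (alpha beta : nat -> nat) :
  ramif r d alpha -> ramif r d beta ->
  (0 <= g%:Z - d%:Z + r%:Z)%R ->
  rho g r d alpha beta = 0%R ->
  2 <= r ->
  ((r.+1)%:Z < (alpha r)%:Z + (beta r)%:Z + g%:Z - d%:Z + r%:Z)%R ->
  exists t a : nat,
    [/\ 1 <= t < g, 0 < a,
        (exists2 T, T \in YT g r d alpha beta & piEH t a T != T) &
        4 * #|[set T in YT g r d alpha beta | piEH t a T != T]|
          <= #|YT g r d alpha beta|].
Proof.
move=> ramif_alpha ramif_beta m_ge0 rho0 r_ge2 room.
have card_g : #|[pred b : box g r d alpha beta | inshape b]| = g.
  by rewrite card_inshape // -g_of_rho0.
have corner_room : 3 < alpha r + beta r + mm g r d by rewrite /mm; lia.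
have moves := piEH_moves_at_bottom_cut ramif_alpha ramif_beta r_ge2 corner_room card_g.
set t := #|_| in moves.
have [a a_in small] := @exists_small_fiber _ (YT g r d alpha beta)
  (fun T => dist (pos T t) (pos T t.+1)) (fun a T => piEH t a T != T) [:: 5; 2; 4; 3]
  isT isT (fun a T => @piEH_moved_dist _ _ _ _ _ T t a).
have [t_range moved] := moves a a_in.
exists t, a; split=> //.
by move: a_in; rewrite !inE => /or4P[] /eqP ->.
Qed.
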